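(* Let $G$ be a $\sigma$-compact locally compact Abelian group and $\omega=\sum_{x\in\Gamma}\omega(x)\delta_x$ a concentrated weighted comb with $\|\omega\|_\infty<\infty$. Then $\omega$ is norm-almost periodic if and only if $\omega$ is sup-almost periodic.
   Context: $\|\omega\|_\infty:=\sup_x|\omega(\{x\})|$. Fix a compact $K\subset G$ with nonempty interior and set $\|\mu\|_K:=\sup_{t\in G}|\mu|(t+K)$; $T_t\mu(A)=\mu(A-t)$. A weighted comb $\omega$ is concentrated if for every $\varepsilon>0$ there is a set $\Lambda\subset G$ with finite local complexity ($\Lambda-\Lambda$ locally finite) such that $\|\omega-\omega|_\Lambda\|_K<\varepsilon$, where $\omega|_\Lambda=\sum_{x\in\Gamma\cap\Lambda}\omega(x)\delta_x$. Norm-almost periodic: $\{t:\|\omega-T_t\omega\|_K<\varepsilon\}$ relatively dense for all $\varepsilon>0$; sup-almost periodic: $\{t:\sup_x|\omega(\{t+x\})-\omega(\{x\})|<\varepsilon\}$ relatively dense for all $\varepsilon>0$. *)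

From Stdlib Require Import Reals List.
Open Scope R_scope.
Import ListNotations.

Definition Cx := (R * R)%type.
Definition Cminus (a b : Cx) : Cx := (fst a - fst b, snd a - snd b).
Definition Cmod (a : Cx) : R := sqrt (fst a * fst a + snd a * snd a).
Definition C0 : Cx := (0, 0).

Section Group.
Variable G : Type.
Variables (add : G -> G -> G) (opp : G -> G) (zero : G).
Variable open : (G -> Prop) -> Prop.

Definition abelian_group_axioms : Prop :=
  (forall x y z, add x (add y z) = add (add x y) z) /\
  (forall x y, add x y = add y x) /\
  (forall x, add x zero = x) /\
  (forall x, add x (opp x) = zero).

Definition topology_axioms : Prop :=
  open (fun _ => True) /\ open (fun _ => False) /\
  (forall U V, open U -> open V -> open (fun x => U x /\ V x)) /\
  (forall (I : Type) (U : I -> G -> Prop), (forall i, open (U i)) ->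
      open (fun x => exists i, U i x)).

Definition hausdorff : Prop :=
  forall x y, x <> y -> exists U V, open U /\ open V /\ U x /\ V y /\
     (forall z, U z -> V z -> False).

Definition add_continuous : Prop :=
  forall x y (U : G -> Prop), open U -> U (add x y) ->
    exists V W, open V /\ open W /\ V x /\ W y /\
      (forall v w, V v -> W w -> U (add v w)).

Definition opp_continuous : Prop :=
  forall x (U : G -> Prop), open U -> U (opp x) ->
    exists V, open V /\ V x /\ (forall v, V v -> U (opp v)).

Definition compact_set (K : G -> Prop) : Prop :=
  forall (I : Type) (U : I -> G -> Prop), (forall i, open (U i)) ->
    (forall x, K x -> exists i, U i x) ->
    exists l : list I, forall x, K x -> exists i, In i l /\ U i x.

Definition locally_compact : Prop :=
  forall x, exists U C, open U /\ compact_set C /\ U x /\ (forall y, U y -> C y).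

Definition sigma_compact : Prop :=
  exists Kn : nat -> G -> Prop, (forall n, compact_set (Kn n)) /\
    forall x, exists n, Kn n x.

Definition sigma_compact_LCA_group : Prop :=
  abelian_group_axioms /\ topology_axioms /\ hausdorff /\
  add_continuous /\ opp_continuous /\ locally_compact /\ sigma_compact.

Definition nonempty_interior (K : G -> Prop) : Prop :=
  exists U x, open U /\ U x /\ (forall y, U y -> K y).

Definition translate (t : G) (A : G -> Prop) : G -> Prop :=
  fun y => exists a, A a /\ y = add t a.

Definition finite_set (A : G -> Prop) : Prop :=
  exists l : list G, forall x, A x -> In x l.

Definition locally_finite (A : G -> Prop) : Prop :=
  forall C, compact_set C -> finite_set (fun x => A x /\ C x).

Definition FLC (L : G -> Prop) : Prop :=
  locally_finite (fun z => exists x y, L x /\ L y /\ z = add x (opp y)).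

Definition relatively_dense (S : G -> Prop) : Prop :=
  exists C, compact_set C /\ forall x, exists s c, S s /\ C c /\ x = add s c.

(* ---------- pure point measures given by weights w : G -> Cx ----------
   The measure is  sum_{x : w x <> 0} w(x) delta_x ; its support is Gamma. *)

Definition tv_le (w : G -> Cx) (A : G -> Prop) (c : R) : Prop :=
  forall l : list G, NoDup l -> (forall x, In x l -> A x) ->
    fold_right Rplus 0 (map (fun x => Cmod (w x)) l) <= c.

(* the sum defines a (Radon) measure: finite total variation on compacts *)
Definition weighted_comb (w : G -> Cx) : Prop :=
  forall C, compact_set C -> exists c, tv_le w C c.

(* ||w||_K < eps, where ||mu||_K = sup_t |mu|(t+K) *)
Definition normK_lt (K : G -> Prop) (w : G -> Cx) (eps : R) : Prop :=
  exists c, c < eps /\ forall t, tv_le w (translate t K) c.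

Definition sup_norm_finite (w : G -> Cx) : Prop :=
  exists M, forall x, Cmod (w x) <= M.

(* omega|_Lambda has weights w x on Lambda and 0 off Lambda; hence
   omega - omega|_Lambda has weights w x off Lambda and 0 on Lambda, and
   |omega - omega|_Lambda|(t+K) is the total variation of w over (t+K) \ Lambda. *)
Definition concentrated (K : G -> Prop) (w : G -> Cx) : Prop :=
  forall eps, 0 < eps -> exists L : G -> Prop, FLC L /\
    exists c, c < eps /\
      forall t, tv_le w (fun x => translate t K x /\ ~ L x) c.

(* T_t omega ({x}) = omega({x - t}) *)
Definition diff_translate (w : G -> Cx) (t : G) : G -> Cx :=
  fun x => Cminus (w x) (w (add x (opp t))).

Definition norm_almost_periodic (K : G -> Prop) (w : G -> Cx) : Prop :=
  forall eps, 0 < eps ->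
    relatively_dense (fun t => normK_lt K (diff_translate w t) eps).

Definition sup_almost_periodic (w : G -> Cx) : Prop :=
  forall eps, 0 < eps ->
    relatively_dense (fun t => exists c, c < eps /\
        forall x, Cmod (Cminus (w (add t x)) (w x)) <= c).
End Group.

(* Sup-almost periodicity follows from norm-almost periodicity by testing
   ||omega - T_t omega||_K on a single point of a translate of K.  Conversely,
   fix eps, take an FLC set Lambda carrying all but eps/4 of the mass of every
   translate t+K, and let N bound the number of points of Lambda in any t+K.
   On t+K the weights of omega - T_t omega are at most sup_x |omega(x+t) -
   omega(x)| at the at most 2N points of Lambda ∪ (Lambda + t), and off them
   their total mass is at most twice the mass of omega off Lambda.  So a
   sup-almost period small enough relative to N is an eps-norm-almost period. *)

From Stdlib Require Import Reals List Lra Lia FinFun ClassicalEpsilon.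
From Coquelicot Require Complex.
Open Scope R_scope.
Import ListNotations.

Lemma Cmod_ge0 (a : Cx) : 0 <= Cmod a.
Proof. apply sqrt_pos. Qed.

Lemma Cmod_Cminus_le (a b : Cx) : Cmod (Cminus a b) <= Cmod a + Cmod b.
Proof.
  assert (Cmod_E : forall x : Cx, Cmod x = Complex.Cmod x).
  { intros [x y]; unfold Cmod, Complex.Cmod; simpl; f_equal; ring. }
  rewrite !Cmod_E, <- (Complex.Cmod_opp b).
  replace (Cminus a b) with (Complex.Cplus a (Complex.Copp b)).
  - apply Complex.Cmod_triangle.
  - destruct a, b; unfold Cminus, Complex.Cplus, Complex.Copp; simpl; f_equal; ring.
Qed.

Definition holds (P : Prop) : bool :=
  if excluded_middle_informative P then true else false.

Lemma holds_true (P : Prop) : holds P = true <-> P.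
Proof. unfold holds; destruct (excluded_middle_informative P); intuition congruence. Qed.

Lemma holds_false (P : Prop) : holds P = false <-> ~ P.
Proof. unfold holds; destruct (excluded_middle_informative P); intuition congruence. Qed.

Lemma length_filter_orb {A} (a b : A -> bool) l :
  (length (filter (fun x => orb (a x) (b x)) l)
     <= length (filter a l) + length (filter b l))%nat.
Proof. induction l as [|x l IH]; simpl; [|destruct (a x), (b x); simpl]; lia. Qed.

Definition sumR {A} (f : A -> R) (l : list A) : R := fold_right Rplus 0 (map f l).

Lemma sumR_le {A} (f g : A -> R) l :
  (forall x, In x l -> f x <= g x) -> sumR f l <= sumR g l.
Proof.
  unfold sumR; induction l as [|a l IH]; intros Hfg; simpl; [lra|].
  apply Rplus_le_compat; auto with datatypes.
Qed.

Lemma sumR_plus {A} (f g : A -> R) l :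
  sumR (fun x => f x + g x) l = sumR f l + sumR g l.
Proof. unfold sumR; induction l as [|a l IH]; simpl; [|rewrite IH]; lra. Qed.

Lemma sumR_filter {A} (f : A -> R) p l :
  sumR f l = sumR f (filter p l) + sumR f (filter (fun x => negb (p x)) l).
Proof.
  unfold sumR; induction l as [|a l IH]; simpl; [lra|].
  destruct (p a); simpl; rewrite IH; lra.
Qed.

Lemma sumR_le_const {A} (f : A -> R) d l :
  (forall x, In x l -> f x <= d) -> sumR f l <= d * INR (length l).
Proof.
  unfold sumR; induction l as [|a l IH]; intros Hf; [simpl; lra|].
  cbn [length map fold_right]; rewrite S_INR.
  specialize (IH (fun x Hx => Hf x (or_intror Hx))).
  specialize (Hf a (or_introl eq_refl)); lra.
Qed.

Lemma sumR_map {A B} (f : B -> R) (g : A -> B) l :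
  sumR f (map g l) = sumR (fun x => f (g x)) l.
Proof. unfold sumR; rewrite map_map; reflexivity. Qed.

Fixpoint list_inter {G A : Type} (W : A -> G -> Prop) (l : list A) : G -> Prop :=
  match l with
  | [] => fun _ => True
  | q :: l => fun x => W q x /\ list_inter W l x
  end.

Lemma list_inter_spec {G A} (W : A -> G -> Prop) l x :
  list_inter W l x <-> forall q, In q l -> W q x.
Proof.
  induction l as [|q l IH]; simpl; [firstorder|].
  rewrite IH; firstorder congruence.
Qed.

Section Group.

Variables (G : Type) (add : G -> G -> G) (opp : G -> G) (zero : G).
Hypothesis Hgroup : abelian_group_axioms G add opp zero.

Let addA x y z : add x (add y z) = add (add x y) z. Proof. apply Hgroup. Qed.
Let addC x y : add x y = add y x. Proof. apply Hgroup. Qed.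
Let add0 x : add x zero = x. Proof. apply Hgroup. Qed.
Let addN x : add x (opp x) = zero. Proof. apply Hgroup. Qed.

Lemma opp_unique a b : add a b = zero -> b = opp a.
Proof. intro Hab. rewrite <- (add0 b), <- (addN a), addA, (addC b a), Hab, addC, add0. reflexivity. Qed.

Lemma opp_add a b : opp (add a b) = add (opp a) (opp b).
Proof.
  symmetry; apply opp_unique.
  rewrite (addC (opp a)), addA, <- (addA a b), addN, add0, addN. reflexivity.
Qed.

Lemma add_sub_cancel_l a b : add (add a b) (opp a) = b.
Proof. rewrite (addC a b), <- addA, addN, add0. reflexivity. Qed.

Lemma add_sub_cancel t x : add t (add x (opp t)) = x.
Proof. rewrite addA, (addC t x), <- addA, addN, add0. reflexivity. Qed.

Lemma sub_add_add_l s a b : add (add s a) (opp (add s b)) = add a (opp b).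
Proof.
  rewrite opp_add, (addC (opp s)), addA, <- (addA s a), (addC s), <- addA, addN, add0.
  reflexivity.
Qed.

Lemma sub_injective t : Injective (fun x => add x (opp t)).
Proof. intros y y' Hyy'. rewrite <- (add_sub_cancel t y), <- (add_sub_cancel t y'), Hyy'. reflexivity. Qed.

Lemma translate_sub s t K x :
  translate G add s K x -> translate G add (add s (opp t)) K (add x (opp t)).
Proof. intros [k [Kk ->]]. exists k; split; [exact Kk|]. rewrite <- !addA, (addC k). reflexivity. Qed.

Lemma translate_mem y K k : K k -> translate G add (add y (opp k)) K y.
Proof. intro Kk. exists k; split; [exact Kk|]. rewrite addC, add_sub_cancel. reflexivity. Qed.

End Group.

Section Topology.

Variables (G : Type) (add : G -> G -> G) (opp : G -> G) (zero : G).
Variable open : (G -> Prop) -> Prop.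
Hypotheses (Htop : topology_axioms G open)
  (Hadd : add_continuous G add open) (Hopp : opp_continuous G opp open).

Let diff_set (K : G -> Prop) : G -> Prop :=
  fun z => exists a b, K a /\ K b /\ z = add a (opp b).

Lemma list_inter_open {A} (W : A -> G -> Prop) l :
  (forall q, open (W q)) -> open (list_inter W l).
Proof. intro HW; induction l as [|q l IH]; simpl; apply Htop; auto. Qed.

(* The tube lemma: for a fixed b, one neighbourhood of b in the second
   variable works for every a in the compact K simultaneously. *)
Lemma diff_cover_tube (K : G -> Prop) (I : Type) (U : I -> G -> Prop) b :
  compact_set G open K -> (forall i, open (U i)) ->
  (forall z, diff_set K z -> exists i, U i z) -> K b ->
  exists (W : G -> Prop) (l : list I), open W /\ W b /\
    forall a v, K a -> W v -> exists i, In i l /\ U i (add a (opp v)).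
Proof.
  intros HK HU Hcov Kb.
  set (good := fun q : I * (G -> Prop) * (G -> Prop) =>
    let '(i, V, W) := q in
    open V /\ open W /\ W b /\ forall v v', V v -> W v' -> U i (add v (opp v'))).
  destruct (HK {q | good q} (fun j => snd (fst (proj1_sig j)))) as [l Hl].
  - intros [[[i V] W] Hq]; apply Hq.
  - intros a Ka.
    destruct (Hcov (add a (opp b))) as [i Hi]; [exists a, b; auto|].
    destruct (Hadd a (opp b) (U i) (HU i) Hi) as [V [W' [HV [HW' [Va [Wb' HVW]]]]]].
    destruct (Hopp b W' HW' Wb') as [W [HW [Wb HWW]]].
    assert (Hgood : good (i, V, W)) by (repeat split; auto).
    exists (exist _ _ Hgood); exact Va.
  - exists (list_inter (fun j : {q | good q} => snd (proj1_sig j)) l),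
      (map (fun j : {q | good q} => fst (fst (proj1_sig j))) l).
    split; [|split].
    + apply list_inter_open. intros [[[i V] W] Hq]; apply Hq.
    + apply list_inter_spec. intros [[[i V] W] Hq] _; apply Hq.
    + intros a v Ka Hv. destruct (Hl a Ka) as [j [Hj Vj]].
      exists (fst (fst (proj1_sig j))); split; [exact (in_map _ _ _ Hj)|].
      rewrite list_inter_spec in Hv. specialize (Hv j Hj).
      destruct j as [[[i V] W] Hq]; simpl in *. apply Hq; assumption.
Qed.

Lemma diff_compact (K : G -> Prop) :
  compact_set G open K -> compact_set G open (diff_set K).
Proof.
  intros HK I U HU Hcov.
  set (tube := fun p : (G -> Prop) * list I => open (fst p) /\
    forall a v, K a -> fst p v -> exists i, In i (snd p) /\ U i (add a (opp v))).
  destruct (HK {p | tube p} (fun j => fst (proj1_sig j))) as [l Hl].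
  - intros [p Hp]; apply Hp.
  - intros b Kb.
    destruct (diff_cover_tube K I U b HK HU Hcov Kb) as [W [li [HW [Wb Hli]]]].
    assert (Htube : tube (W, li)) by (split; assumption).
    exists (exist _ _ Htube); exact Wb.
  - exists (flat_map (fun j : {p | tube p} => snd (proj1_sig j)) l).
    intros z [a [b [Ka [Kb ->]]]].
    destruct (Hl b Kb) as [[p Hp] [Hj Hpb]].
    destruct (proj2 Hp a b Ka Hpb) as [i [Hi HUi]].
    exists i; split; [apply in_flat_map; exists (exist _ p Hp)|]; auto.
Qed.

Hypothesis Hgroup : abelian_group_axioms G add opp zero.

(* Translating the points of (s+K) ∩ L by -x0, for one of them x0, lands them in
   (K - K) ∩ (L - L), a finite set independent of s. *)
Lemma FLC_translate_count_bound (K L : G -> Prop) :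
  compact_set G open K -> FLC G add opp open L ->
  exists N : nat, forall s l, NoDup l ->
    (forall x, In x l -> L x /\ translate G add s K x) -> (length l <= N)%nat.
Proof.
  intros HK HL.
  destruct (HL _ (diff_compact K HK)) as [m Hm].
  exists (length m). intros s [|x0 l] Hnd Hin; [simpl; lia|].
  rewrite <- (length_map (fun y => add y (opp x0)) (x0 :: l)).
  apply NoDup_incl_length.
  - apply Injective_map_NoDup; [apply (sub_injective G add opp zero Hgroup)|exact Hnd].
  - intros z Hz. apply in_map_iff in Hz. destruct Hz as [y [<- Hy]].
    apply Hm. destruct (Hin y Hy) as [Ly [k1 [Kk1 ->]]].
    destruct (Hin x0 (or_introl eq_refl)) as [Lx0 [k2 [Kk2 ->]]].
    split; [exists (add s k1), (add s k2); auto|].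
    exists k1, k2; repeat split; auto. apply (sub_add_add_l G add opp zero Hgroup).
Qed.

End Topology.

Lemma relatively_dense_mono G add open (S S' : G -> Prop) :
  (forall t, S t -> S' t) ->
  relatively_dense G add open S -> relatively_dense G add open S'.
Proof.
  intros HSS' [C [HC Hdense]]. exists C; split; [exact HC|].
  intro x. destruct (Hdense x) as [s [c [Ss [Cc ->]]]]. exists s, c; auto.
Qed.

Section TotalVariation.

Variables (G : Type) (w : G -> Cx).

Lemma tv_le_nonneg A c : tv_le G w A c -> 0 <= c.
Proof. intro Htv. exact (Htv [] (NoDup_nil _) (fun x Hx => False_ind _ Hx)). Qed.

Lemma tv_le_point A c y : tv_le G w A c -> A y -> Cmod (w y) <= c.
Proof.
  intros Htv Ay. specialize (Htv [y] (NoDup_cons _ (in_nil (a := y)) (NoDup_nil _))).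
  simpl in Htv. rewrite <- (Rplus_0_r (Cmod (w y))). apply Htv.
  intros x [<-|[]]; exact Ay.
Qed.

Lemma tv_le_injective_map A c (f : G -> G) l :
  tv_le G w A c -> Injective f -> NoDup l -> (forall x, In x l -> A (f x)) ->
  sumR (fun x => Cmod (w (f x))) l <= c.
Proof.
  intros Htv Hf Hnd HA. rewrite <- (sumR_map (fun x => Cmod (w x))).
  apply Htv; [apply Injective_map_NoDup; assumption|].
  intros z Hz. apply in_map_iff in Hz. destruct Hz as [x [<- Hx]]. auto.
Qed.

End TotalVariation.

Section Masses.

Variables (G : Type) (add : G -> G -> G) (opp : G -> G) (zero : G).
Hypothesis Hgroup : abelian_group_axioms G add opp zero.
Variable w : G -> Cx.

Lemma normK_lt_diff_translate_sup K t eps :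
  (exists k, K k) -> normK_lt G add K (diff_translate G add opp w t) eps ->
  exists c, c < eps /\ forall x, Cmod (Cminus (w (add t x)) (w x)) <= c.
Proof.
  intros [k Kk] [c [Hc Htv]]. exists c; split; [exact Hc|]. intro x.
  pose proof (tv_le_point _ _ _ _ _ (Htv (add (add t x) (opp k)))
    (translate_mem G add opp zero Hgroup _ K k Kk)) as Hpt.
  unfold diff_translate in Hpt. rewrite (add_sub_cancel_l G add opp zero Hgroup) in Hpt.
  exact Hpt.
Qed.

Variables (K L : G -> Prop) (N : nat) (c : R).
Hypothesis HN : forall s l, NoDup l ->
  (forall x, In x l -> L x /\ translate G add s K x) -> (length l <= N)%nat.
Hypothesis Hoff : forall s, tv_le G w (fun x => translate G add s K x /\ ~ L x) c.
Variables (t : G) (c' : R).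
Hypothesis Hsup : forall x, Cmod (Cminus (w (add t x)) (w x)) <= c'.

Let d x := Cmod (diff_translate G add opp w t x).
Let near x := orb (holds (L x)) (holds (L (add x (opp t)))).

Lemma diff_translate_mass_near s l :
  NoDup l -> (forall x, In x l -> translate G add s K x) ->
  sumR d (filter near l) <= c' * (2 * INR N).
Proof.
  intros Hnd Hin.
  assert (Hc' : 0 <= c') by exact (Rle_trans _ _ _ (Cmod_ge0 _) (Hsup zero)).
  apply Rle_trans with (c' * INR (length (filter near l))).
  { apply sumR_le_const. intros x _. unfold d, diff_translate.
    rewrite <- (add_sub_cancel G add opp zero Hgroup t x) at 1. apply Hsup. }
  apply Rmult_le_compat_l; [exact Hc'|].
  replace (2 * INR N) with (INR (N + N)) by (rewrite plus_INR; lra).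
  apply le_INR. eapply Nat.le_trans; [apply length_filter_orb|].
  apply Nat.add_le_mono.
  - apply (HN s); [apply NoDup_filter, Hnd|].
    intros x Hx. apply filter_In in Hx. destruct Hx as [Hx HLx].
    split; [apply holds_true, HLx|apply Hin, Hx].
  - rewrite <- (length_map (fun x => add x (opp t))).
    apply (HN (add s (opp t))).
    + apply Injective_map_NoDup; [apply (sub_injective G add opp zero Hgroup)|].
      apply NoDup_filter, Hnd.
    + intros z Hz. apply in_map_iff in Hz. destruct Hz as [x [<- Hx]].
      apply filter_In in Hx. destruct Hx as [Hx HLx].
      split; [apply holds_true, HLx|].
      apply (translate_sub G add opp zero Hgroup), Hin, Hx.
Qed.

Lemma diff_translate_mass_far s l :
  NoDup l -> (forall x, In x l -> translate G add s K x) ->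
  sumR d (filter (fun x => negb (near x)) l) <= 2 * c.
Proof.
  intros Hnd Hin.
  set (far := filter (fun x => negb (near x)) l).
  assert (Hfar : forall x, In x far ->
      translate G add s K x /\ ~ L x /\ ~ L (add x (opp t))).
  { intros x Hx. apply filter_In in Hx. destruct Hx as [Hx Hnear].
    unfold near in Hnear. apply Bool.negb_true_iff, Bool.orb_false_iff in Hnear.
    destruct Hnear as [HLx HLxt]. apply holds_false in HLx, HLxt. auto. }
  assert (Hnd_far : NoDup far) by apply NoDup_filter, Hnd.
  apply Rle_trans with (sumR (fun x => Cmod (w x) + Cmod (w (add x (opp t)))) far).
  { apply sumR_le. intros x _. apply Cmod_Cminus_le. }
  rewrite sumR_plus. replace (2 * c) with (c + c) by ring. apply Rplus_le_compat.
  - apply (Hoff s far Hnd_far). intros x Hx. destruct (Hfar x Hx) as [? [? _]]; auto.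
  - apply (tv_le_injective_map _ _ _ _ _ _ (Hoff (add s (opp t))));
      [apply (sub_injective G add opp zero Hgroup)|exact Hnd_far|].
    intros x Hx. destruct (Hfar x Hx) as [Hsx [_ HLxt]].
    split; [apply (translate_sub G add opp zero Hgroup), Hsx|exact HLxt].
Qed.

Lemma tv_le_diff_translate s :
  tv_le G (diff_translate G add opp w t) (translate G add s K) (c' * (2 * INR N) + 2 * c).
Proof.
  intros l Hnd Hin. change (sumR d l <= c' * (2 * INR N) + 2 * c).
  rewrite (sumR_filter d near l). apply Rplus_le_compat.
  - exact (diff_translate_mass_near s l Hnd Hin).
  - exact (diff_translate_mass_far s l Hnd Hin).
Qed.

End Masses.

Theorem lemma13p6
  (G : Type) (add : G -> G -> G) (opp : G -> G) (zero : G)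
  (open : (G -> Prop) -> Prop)
  (HG : sigma_compact_LCA_group G add opp zero open)
  (K : G -> Prop) (HKc : compact_set G open K)
  (HKi : nonempty_interior G open K)
  (w : G -> Cx)
  (Hw : weighted_comb G open w)
  (Hconc : concentrated G add opp open K w)
  (Hinf : sup_norm_finite G w) :
  norm_almost_periodic G add opp open K w <-> sup_almost_periodic G add open w.
Proof.
  destruct HG as [Hgroup [Htop [_ [Hadd [Hopp _]]]]].
  assert (HK0 : exists k, K k) by (destruct HKi as [U [k [_ [Uk HUK]]]]; eauto).
  split; intros Hap eps Heps.
  - apply (relatively_dense_mono _ _ _ _ _ (fun t => normK_lt_diff_translate_sup
      G add opp zero Hgroup w K t eps HK0) (Hap eps Heps)).
  - destruct (Hconc (eps / 4)) as [L [HL [c [Hc Hoff]]]]; [lra|].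
    destruct (FLC_translate_count_bound G add opp zero open Htop Hadd Hopp Hgroup
      K L HKc HL) as [N HN].
    pose proof (pos_INR N) as HN0.
    set (delta := eps / (4 * (INR N + 1))).
    assert (Hdelta : delta * (4 * (INR N + 1)) = eps) by (unfold delta; field; lra).
    assert (Hdelta0 : 0 < delta) by (unfold delta; apply Rdiv_lt_0_compat; lra).
    refine (relatively_dense_mono _ _ _ _ _ _ (Hap delta Hdelta0)).
    intros t [c' [Hc' Hsup]].
    pose proof (tv_le_nonneg _ _ _ _ (Hoff zero)) as Hc0.
    exists (c' * (2 * INR N) + 2 * c); split.
    + assert (c' * (2 * INR N) <= delta * (2 * INR N)) by (apply Rmult_le_compat_r; lra).
      nra.
    + exact (tv_le_diff_translate G add opp zero Hgroup w K L N c HN Hoff t c' Hsup).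
Qed.
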